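(* Let $p>5$ be a prime and $A\subseteq\mathbb{F}_p$ satisfy $A-A\doteq\mathcal{R}_p$. Then the multiplier subgroup $M_A$ has odd order; equivalently, $-1\notin M_A$.
   Context: $\mathcal{R}_p$ is the set of nonzero quadratic residues modulo $p$. $A-A\doteq S$ means: every element of $S$ has exactly one representation as $a'-a''$ with $a',a''\in A$, and every difference $a'-a''$ with $a'\ne a''$ in $A$ lies in $S$. An element $\mu\in\mathbb{F}_p^\times$ is a multiplier of $A$ if $\mu A=A+g$ for some $g\in\mathbb{F}_p$, where $\mu A=\{\mu a\colon a\in A\}$; the multipliers form a subgroup $M_A\le\mathbb{F}_p^\times$. *)

From HB Require Import structures.
From mathcomp Require Import all_boot all_order all_algebra.
Set Implicit Arguments. Unset Strict Implicit. Unset Printing Implicit Defensive.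
Import GRing.Theory.
Local Open Scope ring_scope.

Definition qres (p : nat) : {set 'F_p} :=
  [set x : 'F_p | (x != 0) && [exists y : 'F_p, y ^+ 2 == x]].

(* A - A =. S : every s in S has exactly one representation a' - a''
   with a', a'' in A, and every difference of distinct elements of A lies in S. *)
Definition perfect_diff (p : nat) (A S : {set 'F_p}) : Prop :=
  (forall s, s \in S ->
     #|[set u : 'F_p * 'F_p | (u.1 \in A) && (u.2 \in A) && (u.1 - u.2 == s)]| = 1%N)
  /\ (forall a1 a2, a1 \in A -> a2 \in A -> a1 != a2 -> a1 - a2 \in S).

Definition multipliers (p : nat) (A : {set 'F_p}) : {set 'F_p} :=
  [set mu : 'F_p | (mu != 0) &&
     [exists g : 'F_p, [set mu * a | a in A] == [set a + g | a in A]]].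

From mathcomp Require Import all_boot all_order all_algebra.
From mathcomp Require Import ring.
Set Implicit Arguments. Unset Strict Implicit. Unset Printing Implicit Defensive.
Import GRing.Theory.
Local Open Scope ring_scope.

(* If -1 were a multiplier, -A = A + g, the reflection y |-> -g - y would map A
   onto itself while preserving differences, so uniqueness of representations in
   A - A forces x + y = -g for all distinct x, y in A.  Then A has at most two
   points and A - A at most two nonzero differences, whereas R_p contains 1, 4, 9,
   which are distinct for p > 5.  Since M_A is a group not containing -1, inversion
   is a fixed-point-free involution of M_A minus 1 (x = x^-1 forces x = 1 or -1),
   so |M_A| is odd. *)

Lemma fixfree_involution_card_even (T : finType) (f : T -> T) (S : {set T}) :
    {in S, forall x, f x \in S} -> {in S, involutive f} ->
    {in S, forall x, f x != x} -> ~~ odd #|S|.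
Proof.
elim: {S}_.+1 {-2}S (ltnSn #|S|) => // n IHn S leSn fS fK fx_neq.
have [-> | [x xS]] := set_0Vmem S; first by rewrite cards0.
have [fxS fx_x] := (fS x xS, fx_neq x xS).
set S' := S :\ x :\ f x.
have cardS : #|S| = #|S'|.+2.
  by rewrite (cardsD1 x) xS (cardsD1 (f x) (S :\ x)) !inE fx_x fxS.
have S'S y : y \in S' -> y \in S by rewrite !inE => /and3P[].
rewrite cardS /= negbK; apply: IHn => [| y | y /S'S /fK // | y /S'S /fx_neq //].
  by move: leSn; rewrite cardS ltnS => /ltnW.
rewrite !inE => /and3P[yfx yx yS]; rewrite fS // andbT.
have f_inj := inj_in_eq (can_in_inj fK).
by rewrite f_inj // -{2}[x]fK // f_inj ?yx ?yfx.
Qed.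

Lemma pair_sum_subset (T : finZmodType) (A : {set T}) (c a : T) :
    {in A &, forall x y, x != y -> x + y = c} -> a \in A -> A \subset [set a; c - a].
Proof.
move=> sumA aA; apply/subsetP=> x xA; rewrite !inE.
by have [-> // | /sumA <-] := eqVneq x a; rewrite // addrK eqxx orbT.
Qed.

Lemma diff_subset2 (T : finZmodType) (A : {set T}) (a b : T) :
    A \subset [set a; b] -> {in A &, forall x y, x != y -> x - y \in [set a - b; b - a]}.
Proof.
move=> /subsetP sAab x y /sAab + /sAab; rewrite !inE.
by case/orP=> /eqP-> /orP[] /eqP->; rewrite ?eqxx ?orbT.
Qed.

Section Multipliers.
Variables (p : nat) (A : {set 'F_p}).

Lemma multiplier1 : 1 \in multipliers A.
Proof.
rewrite inE oner_neq0; apply/existsP; exists 0.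
by apply/eqP/eq_imset=> a; rewrite mul1r addr0.
Qed.

Lemma multiplierV mu : mu \in multipliers A -> mu^-1 \in multipliers A.
Proof.
rewrite !inE invr_eq0 => /andP[mu0 /existsP[g /eqP muA]]; rewrite mu0.
apply/existsP; exists (- (mu^-1 * g)); apply/eqP/setP=> y.
apply/imsetP/imsetP=> [[a aA ->] | [b bA ->]].
- have /imsetP[b bA eb] : a + g \in [set mu * a | a in A] by rewrite muA; apply: imset_f.
  by exists b; rewrite // -(mulKf mu0 b) -eb mulrDr addrK.
- have /imsetP[a aA ea] : mu * b \in [set a + g | a in A] by rewrite -muA; apply: imset_f.
  by exists a; rewrite // -(mulKf mu0 b) ea mulrDr addrK.
Qed.

Lemma multiplierN1_reflection : -1 \in multipliers A ->
  exists c, {in A, forall y, c - y \in A}.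
Proof.
rewrite inE => /andP[_ /existsP[g /eqP NA]]; exists (- g) => y yA.
have /imsetP[a aA ea] : -1 * y \in [set a + g | a in A] by rewrite -NA; apply: imset_f.
by rewrite mulN1r in ea; rewrite addrC ea addrK.
Qed.

Lemma odd_card_multipliers : -1 \notin multipliers A -> odd #|multipliers A|.
Proof.
move=> N1_notin; rewrite (cardsD1 1) multiplier1 /=.
apply: (@fixfree_involution_card_even _ (fun x => x^-1)) => x.
- by rewrite !in_setD1 invr_eq1 => /andP[-> /multiplierV ->].
- by rewrite invrK.
- rewrite in_setD1 => /andP[x_neq1 xM]; apply: contraNneq N1_notin => xVx.
  have x0 : x != 0 by move: xM; rewrite inE => /andP[].
  have : x ^+ 2 == 1 by rewrite expr2 -{1}xVx mulVf.
  by rewrite sqrf_eq1 (negbTE x_neq1) => /eqP <-.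
Qed.

End Multipliers.

Section PerfectDifferenceSet.
Variables (p : nat) (A S : {set 'F_p}).
Hypothesis AAS : perfect_diff A S.

Lemma perfect_diff_repr s : s \in S -> exists a b, [/\ a \in A, b \in A & a - b = s].
Proof.
move=> sS; case: AAS => /(_ s sS) /eqP /cards1P[[a b] Es] _.
have : (a, b) \in [set (a, b)] by rewrite inE.
by rewrite -Es inE /= => /andP[/andP[aA bA] /eqP ab]; exists a, b.
Qed.

Lemma perfect_diff_inj {a b a' b' : 'F_p} : a \in A -> b \in A -> a' \in A -> b' \in A ->
  a - b \in S -> a - b = a' - b' -> a = a' /\ b = b'.
Proof.
move=> aA bA a'A b'A abS ab_eq; case: AAS => /(_ _ abS) /eqP /cards1P[u Eu] _.
have mem_u x y : x \in A -> y \in A -> x - y = a - b -> (x, y) = u.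
  by move=> xA yA xy; apply/set1P; rewrite -Eu inE /= xA yA xy eqxx.
by move: (mem_u a b aA bA erefl) (mem_u a' b' a'A b'A (esym ab_eq)) => <- [-> ->].
Qed.

Lemma reflection_pair_sum (c : 'F_p) : {in A, forall y, c - y \in A} ->
  {in A &, forall x y, x != y -> x + y = c}.
Proof.
move=> cA x y xA yA xy; have [_ xyS] := AAS.
have xy_eq : x - y = (c - y) - (c - x) by ring.
have [-> _] := perfect_diff_inj xA yA (cA y yA) (cA x xA) (xyS x y xA yA xy) xy_eq.
by rewrite subrK.
Qed.

End PerfectDifferenceSet.

Lemma natr_Fp_neq0 (p n : nat) : prime p -> (0 < n < p)%N -> (n%:R : 'F_p) != 0.
Proof.
by move=> p_pr /andP[n_gt0 n_lt_p]; rewrite -(dvdn_pcharf (pchar_Fp p_pr)) gtnNdvd.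
Qed.

Lemma three_le_card_qres (p : nat) : prime p -> (5 < p)%N -> (3 <= #|qres p|)%N.
Proof.
move=> p_pr p_gt5; have lt_p n : (n <= 5)%N -> (n < p)%N by move/leq_ltn_trans; apply.
have [n2 n3 n5] : [/\ (2 : 'F_p) != 0, (3 : 'F_p) != 0 & (5 : 'F_p) != 0].
  by split; apply: natr_Fp_neq0; rewrite // lt_p.
have sqr_qres (k : 'F_p) : k != 0 -> k ^+ 2 \in qres p.
  by move=> k0; rewrite inE expf_neq0 //=; apply/existsP; exists k.
have sub : 1 |: [set 2 ^+ 2; 3 ^+ 2] \subset qres p.
  apply/subsetP=> x; rewrite in_setU1 in_set2 -(expr1n _ 2) => /or3P[] /eqP->;
  exact: sqr_qres.
apply: leq_trans (subset_leq_card sub); rewrite cardsU1 cards2 !inE.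
have [d41 d91 d94] : [/\ 2 ^+ 2 - 1 = 3 :> 'F_p, 3 ^+ 2 - 1 = 2 ^+ 3 :> 'F_p
                        & 3 ^+ 2 - 2 ^+ 2 = 5 :> 'F_p].
  by split; ring.
have ne41 : (1 : 'F_p) != 2 ^+ 2 by rewrite eq_sym -subr_eq0 d41.
have ne91 : (1 : 'F_p) != 3 ^+ 2 by rewrite eq_sym -subr_eq0 d91 expf_neq0.
have ne94 : (2 ^+ 2 : 'F_p) != 3 ^+ 2 by rewrite eq_sym -subr_eq0 d94.
by rewrite (negbTE ne41) (negbTE ne91) ne94.
Qed.

Lemma multiplierN1_notin (p : nat) (A : {set 'F_p}) :
  prime p -> (5 < p)%N -> perfect_diff A (qres p) -> -1 \notin multipliers A.
Proof.
move=> p_pr p_gt5 AAq; apply/negP=> /multiplierN1_reflection[c cA].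
have qres1 : 1 \in qres p.
  by rewrite inE oner_neq0; apply/existsP; exists 1; rewrite expr1n.
have [a [_ [aA _ _]]] := perfect_diff_repr AAq qres1.
have sAac := pair_sum_subset (reflection_pair_sum AAq cA) aA.
have qres_sub : qres p \subset [set a - (c - a); (c - a) - a].
  apply/subsetP=> s sq; have [x [y [xA yA xys]]] := perfect_diff_repr AAq sq.
  have xy : x != y.
    by apply: contraTneq sq => xy; rewrite -xys xy subrr inE eqxx.
  by rewrite -xys (diff_subset2 sAac).
have := leq_trans (three_le_card_qres p_pr p_gt5) (subset_leq_card qres_sub).
by rewrite cards2; case: (_ != _).
Qed.

Theorem lemma1 (p : nat) (A : {set 'F_p}) :
  prime p -> (5 < p)%N -> perfect_diff A (qres p) ->
  odd #|multipliers A| /\ (-1 : 'F_p) \notin multipliers A.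
Proof.
move=> p_pr p_gt5 AAq; have N1_notin := multiplierN1_notin p_pr p_gt5 AAq.
by split; first exact: odd_card_multipliers.
Qed.
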